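(* Consider a seller with one item and a single ex-post rational buyer; the item's quality $q\in Q=[q_1,q_2]$ has CDF $G$ and density $g$ and is observed only by the seller; the buyer's valuation $v(q)$ is monotone increasing in $q$ with inverse $v^{-1}$. The optimal revenue over obedient fixed-price signaling mechanisms equals the optimal revenue over fixed-price mechanisms without signaling (both equal to $\max_p[1-G(v^{-1}(p))]\cdot p$).
   Context: Fixed-price mechanism (no signaling): the seller posts price $p$; the ex-post rational buyer buys iff $v(q)\ge p$; revenue is $p\cdot\Pr[v(q)\ge p]$. Fixed-price signaling mechanism: a pair $(\pi,p)$ with $\pi:Q\to[0,1]$ the probability of sending signal 1 (''buy'') at quality $q$; it is obedient if $\int_{q_1}^{v^{-1}(p)}\pi(q)g(q)\,\mathrm{d}q=0$ and $\int_{v^{-1}(p)}^{q_2}[1-\pi(q)]g(q)\,\mathrm{d}q=0$; its revenue is $p\int_Q\pi(q)g(q)\,\mathrm{d}q$. *)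

From HB Require Import structures.
From mathcomp Require Import all_boot all_order all_algebra.
From mathcomp Require Import all_classical all_reals all_analysis.
Set Implicit Arguments. Unset Strict Implicit. Unset Printing Implicit Defensive.
Import Order.TTheory GRing.Theory Num.Theory.
Local Open Scope classical_set_scope.
Local Open Scope ring_scope.

Section Mech.
Variables (R : realType) (q1 q2 : R) (g v : R -> R).

Definition leb := (@lebesgue_measure R).

Definition prob_buy (p : R) : \bar R :=
  (\int[leb]_(q in `[q1, q2] `&` [set q | (p <= v q)%R]) (g q)%:E)%E.

Definition fp_revenue (p : R) : \bar R := (p%:E * prob_buy p)%E.

(* pi : Q -> [0,1], probability of sending signal 1 ("buy") at quality q. *)
Definition signaling_scheme (pi : R -> R) : Prop :=
  measurable_fun `[q1, q2] pi /\ (forall q, q1 <= q <= q2 -> 0 <= pi q <= 1).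

(* Obedience: qualities q below v^{-1}(p), i.e. v q < p, never get signal 1;
   qualities at/above v^{-1}(p), i.e. v q >= p, always get signal 1
   (up to g-null sets, as expressed by the integrals). *)
Definition obedient (pi : R -> R) (p : R) : Prop :=
  (\int[leb]_(q in `[q1, q2] `&` [set q | (v q < p)%R]) (pi q * g q)%:E = 0)%E /\
  (\int[leb]_(q in `[q1, q2] `&` [set q | (p <= v q)%R]) ((1 - pi q) * g q)%:E = 0)%E.

Definition sig_revenue (pi : R -> R) (p : R) : \bar R :=
  (p%:E * \int[leb]_(q in `[q1, q2]) (pi q * g q)%:E)%E.

Definition opt_fixed_price : \bar R :=
  ereal_sup [set fp_revenue p | p in [set: R]].

Definition opt_obedient_signaling : \bar R :=
  ereal_sup [set r | exists pi p, signaling_scheme pi /\ obedient pi p /\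
                                  r = sig_revenue pi p].
End Mech.

(* Under an obedient scheme (pi, p), a buyer told "buy" must value the item at
   least p and a buyer not told so must value it below p; hence, up to g-null
   sets, pi is the indicator of the upper set {q | p <= v q}, and the scheme
   sells with exactly the probability of the posted price p.  Conversely that
   indicator is an obedient scheme for every price p, so both suprema range
   over the same set of revenues. *)

From HB Require Import structures.
From mathcomp Require Import all_boot all_order all_algebra.
From mathcomp Require Import all_classical all_reals all_analysis.
From mathcomp Require Import measurable_realfun.
Set Implicit Arguments. Unset Strict Implicit. Unset Printing Implicit Defensive.
Import Order.TTheory GRing.Theory Num.Theory.
Local Open Scope classical_set_scope.
Local Open Scope ring_scope.

Lemma is_interval_setI_ge (R : numDomainType) (I : set R) (f : R -> R) (p : R) :
  is_interval I -> {in I &, {homo f : x y / x <= y}} ->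
  is_interval (I `&` [set x | p <= f x]).
Proof.
move=> intI f_homo x y [Ix px] [Iy py] z xzy.
have Iz := intI x y Ix Iy z xzy.
case/andP: xzy => xz _.
by split=> //; apply: le_trans px (f_homo _ _ _ _ xz); rewrite inE.
Qed.

Lemma ge0_integral_obedient d (T : measurableType d) (R : realType)
    (mu : {measure set T -> \bar R}) (D A : set T) (f g : T -> R) :
  measurable D -> measurable A -> A `<=` D ->
  measurable_fun D f -> measurable_fun D g ->
  (forall x, D x -> 0 <= f x <= 1) -> (forall x, D x -> 0 <= g x) ->
  (\int[mu]_(x in D `\` A) (f x * g x)%:E = 0)%E ->
  (\int[mu]_(x in A) ((1 - f x) * g x)%:E = 0)%E ->
  (\int[mu]_(x in D) (f x * g x)%:E = \int[mu]_(x in A) (g x)%:E)%E.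
Proof.
move=> mD mA AD mf mg f01 g_ge0 out_null in_null.
have mfg : measurable_fun D (fun x => (f x * g x)%:E).
  by apply/measurable_EFinP; exact: measurable_funM.
have m1fg : measurable_fun D (fun x => ((1 - f x) * g x)%:E).
  apply/measurable_EFinP; apply: measurable_funM => //.
  by apply: measurable_funB => //; exact: measurable_cst.
have fg_ge0 x : A x -> (0 <= (f x * g x)%:E)%E.
  move=> /AD Dx; rewrite lee_fin mulr_ge0 ?g_ge0 //.
  by case/andP: (f01 _ Dx).
have f1g_ge0 x : A x -> (0 <= ((1 - f x) * g x)%:E)%E.
  move=> /AD Dx; rewrite lee_fin mulr_ge0 ?g_ge0 ?subr_ge0 //.
  by case/andP: (f01 _ Dx).
have mDA : measurable (D `\` A) by exact: measurableD.
rewrite -[in LHS](setDKU AD) integral_setU ?setDKU //; last first.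
  by apply/disj_setPS => x [[_ nAx] Ax].
rewrite out_null add0e.
have -> : (\int[mu]_(x in A) (g x)%:E =
    \int[mu]_(x in A) ((f x * g x)%:E + ((1 - f x) * g x)%:E))%E.
  by apply: eq_integral => x _; rewrite -EFinD -mulrDl addrC subrK mul1r.
rewrite ge0_integralD ?in_null ?adde0 //.
  exact: measurable_funS mfg.
exact: measurable_funS m1fg.
Qed.

Section FixedPriceSignaling.
Variables (R : realType) (q1 q2 : R) (g v : R -> R).

Definition buyers (p : R) : set R := `[q1, q2] `&` [set q | p <= v q].

Lemma nonbuyers_setD (p : R) :
  `[q1, q2] `&` [set q | v q < p] = `[q1, q2] `\` buyers p.
Proof.
rewrite /buyers setDIr setDv set0U setDE; congr (_ `&` _).
by apply/funext => q /=; apply/propext; rewrite ltNge; split => /negP.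
Qed.

Lemma indic_buyers_obedient (p : R) : obedient q1 q2 g v (\1_(buyers p)) p.
Proof.
split; apply: integral0_eq => q [Qq vq]; rewrite /indic.
  by rewrite memNset ?mul0r // => -[_ /=]; rewrite leNgt vq.
by rewrite mem_set // subrr mul0r.
Qed.

Hypothesis v_incr : {in `[q1, q2] &, {mono v : x y / x < y}}.

Lemma measurable_buyers (p : R) : measurable (buyers p).
Proof.
apply: is_interval_measurable; apply: is_interval_setI_ge.
  exact: interval_is_interval.
move=> x y; rewrite !in_setE => xQ yQ.
by rewrite (le_mono_in (monoW_in v_incr) xQ yQ).
Qed.

Lemma indic_buyers_scheme (p : R) : signaling_scheme q1 q2 (\1_(buyers p)).
Proof.
split; first by apply: measurable_indic; exact: measurable_buyers.
by move=> q _; rewrite /indic; case: (q \in _); rewrite /= ?ler01 ?lexx.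
Qed.

Hypotheses (g_meas : measurable_fun `[q1, q2] g)
  (g_ge0 : forall q, q1 <= q <= q2 -> 0 <= g q).

Lemma sig_revenue_obedient (pi : R -> R) (p : R) :
  signaling_scheme q1 q2 pi -> obedient q1 q2 g v pi p ->
  sig_revenue q1 q2 g pi p = fp_revenue q1 q2 g v p.
Proof.
case=> pi_meas pi01 [out_null in_null].
rewrite /sig_revenue /fp_revenue /prob_buy; congr (_ * _)%E.
apply: ge0_integral_obedient => //; rewrite -?nonbuyers_setD //.
exact: measurable_buyers.
Qed.

End FixedPriceSignaling.

Theorem mainTheorem4 (R : realType) (q1 q2 : R) (g v : R -> R)
  (hq : q1 < q2)
  (g_meas : measurable_fun `[q1, q2] g)
  (g_ge0 : forall q, q1 <= q <= q2 -> 0 <= g q)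
  (g_int1 : (\int[@lebesgue_measure R]_(q in `[q1, q2]) (g q)%:E = 1)%E)
  (v_incr : {in `[q1, q2]&, {mono v : x y / x < y}}) :
  opt_obedient_signaling q1 q2 g v = opt_fixed_price q1 q2 g v.
Proof.
rewrite /opt_obedient_signaling /opt_fixed_price; congr ereal_sup.
apply/seteqP; split=> r.
- move=> [pi [p [pi_scheme [pi_obedient ->]]]].
  by exists p => //; rewrite (sig_revenue_obedient v_incr g_meas g_ge0 pi_scheme).
- move=> [p _ <-]; exists (\1_(buyers q1 q2 v p)), p.
  have indic_scheme := indic_buyers_scheme v_incr p.
  have indic_obedient := indic_buyers_obedient q1 q2 g v p.
  by rewrite (sig_revenue_obedient v_incr g_meas g_ge0 indic_scheme indic_obedient).
Qed.
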